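(* Let $n=2k$, let $r$ be an integer with $1<r<k$ and $\gcd(r,k)=1$, and let $\{u_1,\ldots,u_k\}$ be a basis of $\mathbb{F}_{2^k}$ over $\mathbb{F}_2$. Let $t$ be a positive integer, $F_1,\ldots,F_t$ reduced polynomials in $\mathbb{F}_2[X_1,\ldots,X_k]$, and $f_i(x)=F_i(\mathrm{Tr}^n_1(u_1x),\ldots,\mathrm{Tr}^n_1(u_kx))$. Then $\widehat H(x)=(\sum_{i=1}^{2^r-1}x^{(i2^{k-r}+1)(2^k-1)+1},f_1(x),\ldots,f_t(x))$ is a vectorial plateaued $(n,k+t)$-function if and only if the $(n,t)$-function $(f_1,\ldots,f_t)$ is vectorial plateaued. In particular, if $k>2$ and each $f_i$ is quadratic, then $\widehat H$ is a non-quadratic vectorial plateaued function.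
   Context: $\mathrm{Tr}^m_1(x)=\sum_{i=0}^{m-1}x^{2^i}$. The first coordinate $G(x)=\sum_{i=1}^{2^r-1}x^{(i2^{k-r}+1)(2^k-1)+1}$ takes values in $\mathbb{F}_{2^k}$, so $\widehat H:\mathbb{F}_{2^n}\to\mathbb{F}_{2^k}\times\mathbb{F}_2^t$ with components $\mathrm{Tr}^k_1(\lambda G(x))+\sum_iv_if_i(x)$, $(\lambda,v)\ne(0,0)$. A Boolean function $f$ is plateaued if $W_f(a)=\sum_x(-1)^{f(x)+\mathrm{Tr}^n_1(ax)}$ takes values in $\{0,\pm2^s\}$ for some $n/2\le s\le n$; a vectorial function is vectorial plateaued if all components are plateaued. Quadratic means algebraic degree at most 2. A reduced polynomial is a multilinear polynomial over $\mathbb{F}_2$. *)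

From HB Require Import structures.
From mathcomp Require Import all_boot all_order all_algebra.
Set Implicit Arguments. Unset Strict Implicit. Unset Printing Implicit Defensive.
Import GRing.Theory Num.Theory.
Local Open Scope ring_scope.

Section Defs.
Variable L : finFieldType.

Definition trL (m : nat) (x : L) : L := \sum_(i < m) x ^+ (2 ^ i).
(* its value as an element of F_2 = bool (it lies in {0,1}) *)
Definition trb (m : nat) (x : L) : bool := trL m x == 1.

Definition in_sub (k : nat) (x : L) : bool := x ^+ (2 ^ k) == x.

Definition is_F2_basis (k : nat) (u : 'I_k -> L) : Prop :=
  [/\ forall j, in_sub k (u j),
      forall c : 'I_k -> bool, \sum_(j | c j) u j = 0 -> forall j, ~~ c j
    & forall y, in_sub k y -> exists c : 'I_k -> bool, y = \sum_(j | c j) u j].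

Definition walsh (n : nat) (f : L -> bool) (a : L) : int :=
  \sum_(x : L) (-1) ^+ (f x (+) trb n (a * x)).

Definition plateaued (n : nat) (f : L -> bool) : Prop :=
  exists s : nat, [/\ (n <= 2 * s)%N, (s <= n)%N &
    forall a, (walsh n f a == 0) || (absz (walsh n f a) == 2 ^ s)%N].

Definition wt2 (n j : nat) : nat := \sum_(i < n) odd (j %/ 2 ^ i).

(* algebraic degree at most d: the (unique) univariate representation
   f(x) = sum_{j < 2^n} a_j x^j only involves exponents of 2-weight <= d *)
Definition deg_le (n d : nat) (f : L -> bool) : Prop :=
  exists a : 'I_(2 ^ n) -> L,
    forall x, (f x)%:R = \sum_(j < 2 ^ n | (wt2 n j <= d)%N) a j * x ^+ j.

Definition Gfun (k r : nat) (x : L) : L :=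
  \sum_(1 <= i < 2 ^ r) x ^+ ((i * 2 ^ (k - r) + 1) * (2 ^ k - 1) + 1).

End Defs.

(* reduced (multilinear) polynomials in F_2[X_1..X_k]: set of monomials,
   a monomial being the set of variables it contains *)
Definition reduced_poly (k : nat) := {set {set 'I_k}}.
Definition rp_eval k (P : reduced_poly k) (b : 'I_k -> bool) : bool :=
  \big[addb/false]_(S in P) [forall j in S, b j].

Definition ffun_of (L : finFieldType) (n k : nat) (u : 'I_k -> L)
  (P : reduced_poly k) (x : L) : bool :=
  rp_eval P (fun j => trb n (u j * x)).

Definition fcomp (L : finFieldType) t (f : 'I_t -> L -> bool)
  (v : 'I_t -> bool) (x : L) : bool :=
  \big[addb/false]_(i < t) (v i && f i x).

Definition Hcomp (L : finFieldType) k r t (f : 'I_t -> L -> bool)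
  (lam : L) (v : 'I_t -> bool) (x : L) : bool :=
  trb k (lam * Gfun k r x) (+) fcomp f v x.

Definition f_vplateaued (L : finFieldType) n t (f : 'I_t -> L -> bool) : Prop :=
  forall v : 'I_t -> bool, (exists i, v i) -> plateaued n (fcomp f v).

Definition H_vplateaued (L : finFieldType) n k r t (f : 'I_t -> L -> bool) : Prop :=
  forall (lam : L) (v : 'I_t -> bool), in_sub k lam ->
    (lam != 0 \/ exists i, v i) -> plateaued n (Hcomp k r f lam v).

Definition H_quadratic (L : finFieldType) n k r t (f : 'I_t -> L -> bool) : Prop :=
  forall (lam : L) (v : 'I_t -> bool), in_sub k lam ->
    (lam != 0 \/ exists i, v i) -> deg_le n 2 (Hcomp k r f lam v).

From mathcomp Require Import all_boot all_order all_algebra all_fingroup finfield zify ring.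
Import GRing.Theory Num.Theory.
Local Open Scope ring_scope.
Set Implicit Arguments. Unset Strict Implicit.

(* Let K = F_{2^k} inside L = F_{2^n}, n = 2k, and T(x) = x + x^(2^k) the relative trace, so
   that Tr^n_1 = Tr^k_1 o T and T maps L onto K. Each f_i only sees the traces Tr^n_1(u_j x),
   which do not change when x is translated by K. For G one computes
   G(x)^(2^r) = xb T(x)^(2^r-1) + xb^(2^r) with xb = x^(2^k); hence translating x by e in K
   adds Tr^k_1(e (lambda^(2^r) T(x)^(2^r-1) + lambda)) to Tr^k_1(lambda G(x)).
   Averaging the Walsh sum at a of a component with lambda <> 0 over these translations keeps
   only the x at which that coefficient plus T(a) vanishes; as s |-> s^(2^r-1) is injective on
   K when gcd(r,k) = 1, these x form one coset of K on which the component is constant, so the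
   Walsh values are 0 or +-2^k. The components with lambda = 0 are those of (f_1,...,f_t), and
   quadratic functions are plateaued because W(a)^2 is 2^n times a character sum over the
   radical of the polar form. Finally, if the component with lambda = 1 were quadratic, its
   derivatives along K would make s |-> s^(2^r-1) additive on K, hence the identity there,
   which is impossible for a polynomial of degree 2^r - 1 < 2^k. *)

Lemma modn_mul2l j d : (0 < d)%N -> (j %% (2 * d) = j %% d + odd (j %/ d) * d)%N.
Proof.
move=> d0; rewrite {1}(divn_eq (j %% (2 * d)) d) -modn_divl modn2.
by rewrite (modn_dvdm _ (dvdn_mull 2 (dvdnn d))) addnC.
Qed.

Lemma modn_exp2 n j : (j %% 2 ^ n = \sum_(i < n) odd (j %/ 2 ^ i) * 2 ^ i)%N.
Proof.
elim: n => [|n IH]; first by rewrite expn0 modn1 big_ord0.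
by rewrite big_ord_recr /= -IH expnS modn_mul2l // expn_gt0.
Qed.

Lemma wt2_le2 n j : (j < 2 ^ n)%N -> (wt2 n j <= 2)%N ->
  [\/ j = 0, exists i, j = 2 ^ i | exists i l, j = 2 ^ i + 2 ^ l]%N.
Proof.
move=> jn wj; pose S := [set i : 'I_n | odd (j %/ 2 ^ i)].
have jE : j = (\sum_(i in S) 2 ^ i)%N.
  rewrite -{1}(modn_small jn) modn_exp2 [RHS]big_mkcond /=.
  by apply: eq_bigr => i _; rewrite inE; case: (odd _); rewrite ?mul1n.
have Swt : #|S| = wt2 n j.
  rewrite /wt2 -sum1_card [LHS]big_mkcond /=.
  by apply: eq_bigr => i _; rewrite inE; case: (odd _).
rewrite -Swt leq_eqVlt ltnS leq_eqVlt ltnS leqn0 in wj.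
case/or3P: wj => [/cards2P[i [l [il SE]]] | /cards1P[i SE] | /eqP/cards0_eq SE].
- by apply: Or33; exists i, l; rewrite jE SE big_setU1 ?big_set1 //= inE.
- by apply: Or32; exists i; rewrite jE SE big_set1.
- by apply: Or31; rewrite jE SE big_set0.
Qed.

Section CharTwo.
Variable L : finFieldType.

Lemma sqr_idem (t : L) : t ^+ 2 = t -> t = 0 \/ t = 1.
Proof.
move=> tt; have : t * (t - 1) = 0 by rewrite mulrBr mulr1 -expr2 tt subrr.
by move/eqP; rewrite mulf_eq0 subr_eq0 => /orP[]/eqP; [left | right].
Qed.

Lemma exp2n_fixed_mul a m (w : L) : w ^+ (2 ^ a) = w -> w ^+ (2 ^ (a * m)) = w.
Proof.
move=> wa; elim: m => [|m IH]; first by rewrite muln0 expr1.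
by rewrite mulnS expnD exprM wa IH.
Qed.

Lemma card_trL_roots m :
  (0 < m)%N -> (#|[pred x : L | trL m x == 0%R]| <= 2 ^ m.-1)%N.
Proof.
move=> m0; pose p : {poly L} := \sum_(i < m) 'X^(2 ^ i).
have pE x : p.[x] = trL m x.
  by rewrite horner_sum; apply: eq_bigr => i _; rewrite hornerXn.
have p1 : p`_1 = 1.
  rewrite coef_sum (bigD1 (Ordinal m0)) //= coefXn eqxx big1 ?addr0 // => i.
  by rewrite -val_eqE /= coefXn -[1%N](expn0 2) eqn_exp2l // eq_sym => /negbTE->.
have p0 : p != 0 by apply: contra_eq_neq p1 => ->; rewrite coef0 eq_sym oner_neq0.
have sp : (size p <= (2 ^ m.-1).+1)%N.
  apply/leq_sizeP => j jm; rewrite coef_sum big1 // => i _; rewrite coefXn.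
  case: eqP => // ji; move: jm; rewrite ji ltnNge leq_exp2l //.
  by rewrite -ltnS prednK // ltn_ord.
have roots : all (root p) (enum [pred x : L | trL m x == 0%R]).
  by apply/allP => x; rewrite mem_enum /root pE.
by rewrite cardE -ltnS (leq_trans (max_poly_roots p0 roots (enum_uniq _))).
Qed.

Hypothesis L2 : 2%N \in [pchar L].

Lemma exp2nD m (x y : L) : (x + y) ^+ (2 ^ m) = x ^+ (2 ^ m) + y ^+ (2 ^ m).
Proof.
elim: m => [|m IH]; first by rewrite !expr1.
by rewrite expnSr !exprM IH sqrrD (mulrn_pchar L2) addr0.
Qed.

Lemma exp2n_sum m I (s : seq I) (P : pred I) (G : I -> L) :
  (\sum_(i <- s | P i) G i) ^+ (2 ^ m) = \sum_(i <- s | P i) G i ^+ (2 ^ m).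
Proof.
apply: (big_morph (fun x => x ^+ (2 ^ m))); first exact: exp2nD.
by rewrite expr0n expn_eq0.
Qed.

Lemma exp2n_inj m : injective (fun x : L => x ^+ (2 ^ m)).
Proof.
move=> x y /= xy; have : (x + y) ^+ (2 ^ m) = 0 by rewrite exp2nD xy addrr_pchar2.
by move/eqP; rewrite expf_eq0 (addr_eq0 x) (oppr_pchar2 L2) => /andP[_ /eqP].
Qed.

Lemma exp2n1D r (x y : L) :
  (x + y) ^+ (2 ^ r).-1 = \sum_(i < 2 ^ r) x ^+ i * y ^+ ((2 ^ r).-1 - i).
Proof.
case: r => [|r]; first by rewrite big_ord1 !expr0 mulr1.
have N1 : (1 < 2 ^ r.+1)%N by rewrite -{1}(expn0 2) ltn_exp2l.
have [<- | xy] := eqVneq x y.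
  rewrite addrr_pchar2 // expr0n.
  have -> : ((2 ^ r.+1).-1 == 0)%N = false by lia.
  rewrite (eq_bigr (fun _ => x ^+ (2 ^ r.+1).-1)).
    by rewrite sumr_const card_ord expnS mulrnA (mulrn_pchar L2) mul0rn.
  by move=> i _; rewrite -exprD subnKC //; have := ltn_ord i; lia.
have xy0 : x + y != 0 by rewrite (addr_eq0 x) (oppr_pchar2 L2).
apply: (mulIf xy0); rewrite -exprSr prednK ?expn_gt0 // exp2nD.
rewrite -[y ^+ (2 ^ r.+1)%N](oppr_pchar2 L2) subrXX (oppr_pchar2 L2) mulrC.
congr (_ * _); rewrite (reindex_inj rev_ord_inj) /=.
apply: eq_bigr => i _; have := ltn_ord i => iN.
have -> : ((2 ^ r.+1).-1 - (2 ^ r.+1 - i.+1) = i)%N by lia.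
by have -> : (2 ^ r.+1 - i.+1 = (2 ^ r.+1).-1 - i)%N by lia.
Qed.

Lemma natr_addb (a b : bool) : ((a (+) b)%:R : L) = a%:R + b%:R.
Proof. by case: a; case: b; rewrite /= ?addr0 ?add0r ?addrr_pchar2. Qed.

Lemma trLD m (x y : L) : trL m (x + y) = trL m x + trL m y.
Proof. by rewrite /trL -big_split; apply: eq_bigr => i _; rewrite exp2nD. Qed.

Lemma trL0 m : trL m (0 : L) = 0.
Proof. by rewrite /trL big1 // => i _; rewrite expr0n expn_eq0. Qed.

Lemma trLX m j (x : L) : trL m (x ^+ (2 ^ j)) = trL m x ^+ (2 ^ j).
Proof. by rewrite /trL exp2n_sum; apply: eq_bigr => i _; rewrite -!exprM mulnC. Qed.

Lemma trL01 m (x : L) : x ^+ (2 ^ m) = x -> trL m x = 0 \/ trL m x = 1.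
Proof.
case: m => [|m] xm; first by left; rewrite /trL big_ord0.
apply: sqr_idem; have := trLX m.+1 1 x; rewrite expn1 => <-.
have sqE i : (x ^+ 2) ^+ (2 ^ i) = x ^+ (2 ^ i.+1) by rewrite -exprM expnS.
rewrite /trL big_ord_recr [RHS]big_ord_recl /= sqE xm expr1 addrC.
by congr (_ + _); apply: eq_bigr => i _; rewrite sqE.
Qed.

Lemma trbE m (x : L) : x ^+ (2 ^ m) = x -> trL m x = (trb m x)%:R.
Proof. by rewrite /trb => /trL01[] ->; rewrite ?eqxx // eq_sym oner_eq0. Qed.

Lemma trbD m (x y : L) : x ^+ (2 ^ m) = x -> y ^+ (2 ^ m) = y ->
  trb m (x + y) = trb m x (+) trb m y.
Proof.
move=> xm ym; rewrite {1}/trb trLD (trbE xm) (trbE ym) -natr_addb.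
by case: (_ (+) _); rewrite ?eqxx // eq_sym oner_eq0.
Qed.

Lemma trb0 m : trb m (0 : L) = false.
Proof. by rewrite /trb trL0 eq_sym oner_eq0. Qed.

Lemma natr_big_addb I (s : seq I) (P : pred I) (F : I -> bool) :
  ((\big[addb/false]_(i <- s | P i) F i)%:R : L) = \sum_(i <- s | P i) (F i)%:R.
Proof. exact: (big_morph (fun b : bool => (b%:R : L)) natr_addb). Qed.

Lemma natr_bool_eq0 (b : bool) : (b%:R : L) = 0 -> b = false.
Proof. by case: b => // /eqP; rewrite oner_eq0. Qed.

Lemma mul2r_eq0 (x : L) : 2 * x = 0.
Proof. by rewrite (pcharf0 L2) mul0r. Qed.

Definition third_diff (h : L -> L) (x y e : L) : L :=
  \sum_(p <- [:: x + y + e; x + y; x + e; x; y + e; y; e; 0]) h p.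

Definition third_deriv (g : L -> bool) (x y e : L) : bool :=
  g (x + y + e) (+) g (x + y) (+) g (x + e) (+) g x (+) g (y + e) (+) g y (+) g e (+) g 0.

Definition null_third_derivs (g : L -> bool) : Prop :=
  forall x y e, third_deriv g x y e = false.

Lemma natr_third_deriv g x y e :
  (third_deriv g x y e)%:R = third_diff (fun z => (g z)%:R) x y e.
Proof. by rewrite /third_diff !big_cons big_nil addr0 !natr_addb !addrA. Qed.

Lemma third_diff_const c x y e : third_diff (fun=> c) x y e = 0.
Proof.
rewrite /third_diff !big_cons big_nil.
by transitivity (2 * (c + c + c + c)); [ring | exact: mul2r_eq0].
Qed.

Lemma third_diff_bilinear (A B : L -> L) x y e :
  {morph A : a b / a + b} -> {morph B : a b / a + b} ->
  third_diff (fun z => A z * B z) x y e = 0.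
Proof.
move=> AD BD; have A0 : A 0 = 0 by apply: (addIr (A 0)); rewrite -AD !add0r.
rewrite /third_diff !big_cons big_nil !AD !BD A0 mul0r.
transitivity (2 * (2 * (A x * B x + A y * B y + A e * B e)
  + A x * B y + A y * B x + A x * B e + A e * B x + A y * B e + A e * B y)).
  by ring.
exact: mul2r_eq0.
Qed.

Lemma third_diff_additive (A : L -> L) x y e :
  {morph A : a b / a + b} -> third_diff A x y e = 0.
Proof.
move=> AD; have A0 : A 0 = 0 by apply: (addIr (A 0)); rewrite -AD !add0r.
rewrite /third_diff !big_cons big_nil !AD A0.
by transitivity (2 * (2 * (A x + A y + A e))); [ring | exact: mul2r_eq0].
Qed.

Lemma third_diff_wt2_le2 n j x y e : (j < 2 ^ n)%N -> (wt2 n j <= 2)%N ->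
  third_diff (fun z => z ^+ j) x y e = 0.
Proof.
move=> jn wj; have frobD i : {morph (fun z : L => z ^+ (2 ^ i)) : a b / a + b}.
  by move=> a b; exact: exp2nD.
case: (wt2_le2 jn wj) => [-> | [i ->] | [i [l ->]]].
- exact: third_diff_const.
- exact: third_diff_additive.
- rewrite /third_diff; under eq_bigr do rewrite exprD.
  exact: third_diff_bilinear.
Qed.

Lemma deg_le2_null_third_derivs n g : deg_le n 2 g -> null_third_derivs g.
Proof.
case=> a ga x y e; apply: natr_bool_eq0; rewrite natr_third_deriv /third_diff.
rewrite (eq_bigr _ (fun p _ => ga p)) exchange_big big1 //= => j wj.
rewrite -mulr_sumr -[X in _ * X]/(third_diff (fun z => z ^+ j) x y e).
by rewrite (third_diff_wt2_le2 _ _ _ (ltn_ord j) wj) mulr0.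
Qed.

Lemma null_third_derivs_fcomp t (f : 'I_t -> L -> bool) v :
  (forall i, null_third_derivs (f i)) -> null_third_derivs (fcomp f v).
Proof.
move=> f3 x y e; apply: natr_bool_eq0; rewrite natr_third_deriv /third_diff.
under eq_bigr do rewrite natr_big_addb.
rewrite exchange_big big1 //= => i _; case: (v i); last by rewrite big1.
by rewrite -[LHS]/(third_diff (fun z => (f i z)%:R) x y e) -natr_third_deriv f3.
Qed.

Lemma sum_exp2n_shifted r (x y : L) :
  \sum_(1 <= i < 2 ^ r) x ^+ i * y ^+ (2 ^ r - i) =
  y * (x + y) ^+ (2 ^ r).-1 + y ^+ (2 ^ r).
Proof.
transitivity (\sum_(0 <= i < 2 ^ r) x ^+ i * y ^+ (2 ^ r - i) + y ^+ (2 ^ r)).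
  rewrite [in RHS]big_ltn ?expn_gt0 // expr0 mul1r subn0.
  by rewrite addrC addrA addrr_pchar2 // add0r.
congr (_ + _); rewrite big_mkord exp2n1D mulr_sumr; apply: eq_bigr => i _.
have -> : (2 ^ r - i = ((2 ^ r).-1 - i).+1)%N by have := ltn_ord i; lia.
by rewrite exprS mulrCA.
Qed.

Lemma exp2n1_fixed r (s : L) :
  (s + 1) ^+ (2 ^ r).-1 = s ^+ (2 ^ r).-1 + 1 -> s ^+ (2 ^ r).-1 = s.
Proof.
move=> s1; set d := (2 ^ r).-1 in s1 *.
have dS : (2 ^ r)%N = d.+1 by rewrite prednK ?expn_gt0.
have := exp2nD r s 1; rewrite expr1n dS !exprSr s1 => s1S.
apply/eqP; rewrite -subr_eq0 (oppr_pchar2 L2).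
have -> : s ^+ d + s = (s ^+ d + 1) * (s + 1) - (s ^+ d * s + 1) by ring.
by rewrite s1S subrr.
Qed.

End CharTwo.

Lemma sum_sign_shift_flip (V : finZmodType) (A : pred V) (h : V -> bool) x0 :
  (forall x, A (x + x0) = A x) -> (forall x, A x -> h (x + x0) = ~~ h x) ->
  \sum_(x | A x) (-1) ^+ h x = 0 :> int.
Proof.
move=> Ax0 hx0; set S := (X in X = _); suff : S = - S by lia.
rewrite {1}/S (reindex_inj (addIr x0)) /= (eq_bigl A) // -sumrN.
by apply: eq_bigr => x Ax; rewrite hx0 //; case: (h x); rewrite ?opprK.
Qed.

Section QuadraticPlateaued.
Variables (n : nat) (L : finFieldType).
Hypothesis cardL : #|L| = (2 ^ n)%N.
Let L2 : 2%N \in [pchar L] := card_finPcharP cardL (isT : prime 2).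

Let trbnD (x y : L) : trb n (x + y) = trb n x (+) trb n y.
Proof. by apply: (trbD L2); rewrite -cardL expf_card. Qed.

Variable g : L -> bool.
Hypothesis g3 : null_third_derivs g.

Definition polar x e := g (x + e) (+) g x (+) g e (+) g 0.

Lemma polarDl x y e : polar (x + y) e = polar x e (+) polar y e.
Proof.
move: (g3 x y e); rewrite /third_deriv /polar.
move: (g (x + y + e)) (g (x + y)) (g (x + e)) (g x) (g (y + e)) (g y) (g e) (g 0).
by do 8 case.
Qed.

Lemma polarC x e : polar x e = polar e x.
Proof. by rewrite /polar addrC; case: (g (e + x)); case: (g e); case: (g x). Qed.

Definition radical := [set e | [forall x, ~~ polar x e]].

Lemma radicalD e e' : e \in radical -> e' \in radical -> e + e' \in radical.
Proof.
rewrite !inE => /forallP Re /forallP Re'; apply/forallP => x.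
by rewrite polarC polarDl -!(polarC x); move: (Re x) (Re' x); do 2 case: (polar x _).
Qed.

Lemma radical_group : group_set radical.
Proof.
apply/group_setP; split; last exact: radicalD.
by rewrite inE; apply/forallP => x; rewrite /polar addr0; case: (g x); case: (g 0).
Qed.

Lemma card_radical : exists2 m, (m <= n)%N & #|radical| = (2 ^ m)%N.
Proof.
have := cardSg (G := [set: L]%G) (H := Group radical_group) (subsetT _).
by rewrite cardsT cardL => /(dvdn_pfactor _ _ (isT : prime 2)).
Qed.

Lemma sum_sign_polar e :
  \sum_x (-1) ^+ polar x e = (if e \in radical then #|L|%:R else 0) :> int.
Proof.
case: ifP => [| /negbT]; rewrite inE.
  move=> /forallP Re; rewrite -sumr_const; apply: eq_bigr => x _.
  by move: (Re x); case: (polar x e).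
rewrite negb_forall => /existsP[x0]; rewrite negbK => ex0.
by apply: (sum_sign_shift_flip (x0 := x0)) => // x _; rewrite polarDl ex0 addbT.
Qed.

Definition walsh_phase a e := g e (+) g 0 (+) trb n (a * e).

Lemma walsh_phaseD a e e' : e' \in radical ->
  walsh_phase a (e + e') = walsh_phase a e (+) walsh_phase a e'.
Proof.
rewrite inE => /forallP/(_ e); rewrite /walsh_phase /polar mulrDr trbnD.
move: (g (e + e')) (g e) (g e') (g 0) (trb _ (a * e)) (trb _ (a * e')).
by do 6 case.
Qed.

Lemma sum_sign_walsh_phase a : \sum_(e in radical) (-1) ^+ walsh_phase a e =
  (if [forall e in radical, ~~ walsh_phase a e] then #|radical|%:R else 0) :> int.
Proof.
case: ifP => [/forall_inP Re | /negbT].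
  by rewrite -sumr_const; apply: eq_bigr => e /Re; case: (walsh_phase a e).
rewrite negb_forall_in => /exists_inP[e0 Re0]; rewrite negbK => ee0.
apply: (sum_sign_shift_flip (x0 := e0)) => [e | e Re]; last first.
  by rewrite walsh_phaseD // ee0 addbT.
apply/idP/idP => [Rxe | /radicalD]; last exact.
by have := radicalD Rxe Re0; rewrite -addrA addrr_pchar2 // addr0.
Qed.

Lemma walsh_sqr a :
  walsh n g a ^+ 2 = #|L|%:R * \sum_(e in radical) (-1) ^+ walsh_phase a e.
Proof.
have phase_polar x e :
    (-1) ^+ (g x (+) trb n (a * x)) * (-1) ^+ (g (x + e) (+) trb n (a * (x + e))) =
    (-1) ^+ walsh_phase a e * (-1) ^+ polar x e :> int.
  rewrite -!signr_addb /walsh_phase /polar mulrDr trbnD; congr (_ ^+ _).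
  move: (g x) (g (x + e)) (g e) (g 0) (trb _ (a * x)) (trb _ (a * e)).
  by do 6 case.
rewrite expr2 {1}/walsh mulr_suml.
under eq_bigr => x _ do rewrite /walsh mulr_sumr (reindex_inj (addrI x)) /=.
under eq_bigr => x _ do under eq_bigr => e _ do rewrite phase_polar.
rewrite exchange_big /=.
under eq_bigr => e _ do rewrite -mulr_sumr sum_sign_polar.
rewrite mulr_sumr [RHS]big_mkcond /=; apply: eq_bigr => e _.
by case: (e \in radical); rewrite ?mulr0 // mulrC.
Qed.

Lemma null_third_derivs_plateaued : plateaued n g.
Proof.
have [m mn cardR] := card_radical.
(* W(a)^2 is 0 or 2^(n+m); when n + m is odd only the first case occurs. *)
exists ((n + m).+1 %/ 2)%N; split; [lia | lia | move=> a].
have := walsh_sqr a; rewrite sum_sign_walsh_phase; case: ifP => _; last first.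
  by rewrite mulr0 => /eqP; rewrite expf_eq0 => /andP[_ ->].
rewrite cardR cardL -natrM -expnD; set W := walsh _ _ _ => W2; apply/orP; right.
have aW2 : (`|W| ^ 2 = 2 ^ (n + m))%N by rewrite -abszX W2 natz.
have /(dvdn_pfactor _ _ (isT : prime 2))[s _ aWE] : (`|W| %| 2 ^ (n + m))%N.
  by rewrite -aW2 dvdn_exp.
move: aW2; rewrite aWE -expnM => /eqP; rewrite eqn_exp2l // => /eqP nmE.
by apply/eqP; congr (2 ^ _)%N; lia.
Qed.

End QuadraticPlateaued.

Section RelativeTrace.
Variables (L : finFieldType) (k : nat).
Hypothesis cardL : #|L| = (2 ^ (2 * k))%N.
Let L2 : 2%N \in [pchar L] := card_finPcharP cardL (isT : prime 2).

Definition conjK (x : L) := x ^+ (2 ^ k).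
Definition trLK (x : L) := x + conjK x.

Lemma conjKK (x : L) : conjK (conjK x) = x.
Proof. by rewrite /conjK -exprM -expnD addnn -mul2n -cardL expf_card. Qed.

Lemma conjKD (x y : L) : conjK (x + y) = conjK x + conjK y.
Proof. exact: exp2nD. Qed.

Lemma conjKM (x y : L) : conjK (x * y) = conjK x * conjK y.
Proof. exact: exprMn. Qed.

Lemma conjKX (x : L) m : conjK (x ^+ m) = conjK x ^+ m.
Proof. by rewrite /conjK -!exprM mulnC. Qed.

Lemma in_subP (x : L) : reflect (conjK x = x) (x \in in_sub k).
Proof. exact: eqP. Qed.

Lemma in_sub0 : (0 : L) \in in_sub k.
Proof. by apply/in_subP; rewrite /conjK expr0n expn_eq0. Qed.

Lemma in_sub1 : (1 : L) \in in_sub k.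
Proof. exact/in_subP/expr1n. Qed.

Lemma in_subD (x y : L) : x \in in_sub k -> y \in in_sub k -> x + y \in in_sub k.
Proof. by move=> /in_subP xK /in_subP yK; apply/in_subP; rewrite conjKD xK yK. Qed.

Lemma in_subM (x y : L) : x \in in_sub k -> y \in in_sub k -> x * y \in in_sub k.
Proof. by move=> /in_subP xK /in_subP yK; apply/in_subP; rewrite conjKM xK yK. Qed.

Lemma in_subX (x : L) m : x \in in_sub k -> x ^+ m \in in_sub k.
Proof. by move=> /in_subP xK; apply/in_subP; rewrite conjKX xK. Qed.

Lemma in_sub_div (x y : L) : x \in in_sub k -> y \in in_sub k -> x / y \in in_sub k.
Proof.
move=> xK /in_subP yK; apply: in_subM => //; apply/in_subP.
by move: yK; rewrite /conjK exprVn => ->.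
Qed.

Lemma trLKD (x y : L) : trLK (x + y) = trLK x + trLK y.
Proof. by rewrite /trLK conjKD addrACA. Qed.

Lemma trLK_in_sub (x : L) : trLK x \in in_sub k.
Proof. by apply/in_subP; rewrite /trLK conjKD conjKK addrC. Qed.

Lemma trLK_eq0 (x : L) : (trLK x == 0) = (x \in in_sub k).
Proof. by rewrite /trLK (addr_eq0 x) (oppr_pchar2 L2) eq_sym. Qed.

Lemma trLKMl (s x : L) : s \in in_sub k -> trLK (s * x) = s * trLK x.
Proof. by move=> /in_subP; rewrite /trLK /conjK exprMn mulrDr => ->. Qed.

Lemma trL_trLK (w : L) : trL (2 * k) w = trL k (trLK w).
Proof.
rewrite (trLD L2) /trL mul2n -addnn big_split_ord /=; congr (_ + _).
by apply: eq_bigr => i _; rewrite /conjK -exprM -expnD.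
Qed.

Lemma trb_trLK (w : L) : trb (2 * k) w = trb k (trLK w).
Proof. by rewrite /trb trL_trLK. Qed.

Lemma trb2kD (x y : L) : trb (2 * k) (x + y) = trb (2 * k) x (+) trb (2 * k) y.
Proof. by apply: (trbD L2); rewrite -cardL expf_card. Qed.

Lemma trb2k_shift (a x e : L) : e \in in_sub k ->
  trb (2 * k) (a * (x + e)) = trb (2 * k) (a * x) (+) trb k (e * trLK a).
Proof.
move=> /in_subP eK; rewrite mulrDr trb2kD (trb_trLK (a * e)); congr (_ (+) trb k _).
by move: eK; rewrite /trLK /conjK exprMn => ->; rewrite mulrDr !(mulrC e).
Qed.

Lemma trbkD (x y : L) : x \in in_sub k -> y \in in_sub k ->
  trb k (x + y) = trb k x (+) trb k y.
Proof. by move=> /in_subP xK /in_subP yK; apply: (trbD L2). Qed.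

Lemma trb_exp2n_in_sub j (z : L) : z \in in_sub k -> trb k (z ^+ (2 ^ j)) = trb k z.
Proof.
move=> /in_subP zK; rewrite /trb (trLX L2).
by case: (trL01 L2 zK) => ->; rewrite ?expr0n ?expn_eq0 ?expr1n.
Qed.

(* s / t is fixed by x |-> x^(2^r) and by x |-> x^(2^k), hence by x |-> x^2. *)
Lemma in_sub_expr_inj r (s t : L) : (0 < r)%N -> coprime r k ->
  s \in in_sub k -> t \in in_sub k -> s ^+ (2 ^ r).-1 = t ^+ (2 ^ r).-1 -> s = t.
Proof.
move=> r0 rk /in_subP sK /in_subP tK st.
have d0 : (0 < (2 ^ r).-1)%N by rewrite -ltnS prednK ?expn_gt0 // (ltn_exp2l 0).
have [t0 | t0] := eqVneq t 0.
  by move: st; rewrite t0 expr0n gtn_eqF // => /eqP; rewrite expf_eq0 => /andP[_ /eqP].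
pose w := s / t.
have wr : w ^+ (2 ^ r) = w.
  by rewrite -(prednK (expn_gt0 2 r)) exprS /w exprMn exprVn st divff ?mulr1 ?expf_neq0.
have w2k : (w ^+ 2) ^+ (2 ^ k) = w ^+ 2.
  by rewrite -exprM mulnC exprM; move: sK tK; rewrite /conjK /w exprMn exprVn => -> ->.
have [a _] := Bezoutl k r0; rewrite (eqP rk) => /dvdnP[b ab].
have /sqr_idem[w0 | w1] : w ^+ 2 = w.
  rewrite -{2}(exp2n_fixed_mul b wr) mulnC -ab expnD expn1 exprM mulnC.
  by rewrite exp2n_fixed_mul.
- move: st; rewrite -(divfK t0 s) -/w w0 mul0r expr0n gtn_eqF // => /esym/eqP.
  by rewrite expf_eq0 (negbTE t0) andbF.
- by rewrite -(divfK t0 s) -/w w1 mul1r.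
Qed.

Variable u : 'I_k -> L.
Hypothesis u_basis : is_F2_basis u.

Lemma card_in_sub : #|@in_sub L k| = (2 ^ k)%N.
Proof.
case: u_basis => uK u_free u_span; pose comb (c : {ffun 'I_k -> bool}) := \sum_(j | c j) u j.
have comb_inj : injective comb.
  move=> c c' cc'; apply/ffunP => j; apply/eqP; rewrite -[_ == _]negbK; apply/negP.
  suff : \sum_(i | c i (+) c' i) u i = 0 by move/u_free/(_ j); case: (c j); case: (c' j).
  transitivity (comb c + comb c'); last by rewrite cc' (addrr_pchar2 L2).
  rewrite /comb big_mkcond [X in X + _]big_mkcond [X in _ + X]big_mkcond -big_split.
  apply: eq_bigr => i _.
  by case: (c i); case: (c' i); rewrite /= ?addr0 ?add0r ?(addrr_pchar2 L2).
have -> : #|@in_sub L k| = #|[set comb c | c in [set: {ffun 'I_k -> bool}]]|.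
  apply: eq_card => x; apply/idP/imsetP => [/u_span[c ->] | [c _ ->]].
    by exists [ffun j => c j]; rewrite ?inE // /comb; apply: eq_bigl => j; rewrite ffunE.
  apply: (big_ind (fun y : L => y \in in_sub k)) => [|y z|j _]; last exact: uK.
    exact: in_sub0.
  exact: in_subD.
by rewrite card_imset // cardsT card_ffun card_bool card_ord.
Qed.

Hypothesis k_gt0 : (0 < k)%N.

Lemma exists_trb_in_sub : exists2 e : L, e \in in_sub k & trb k e.
Proof.
have /subsetPn[e eK etr] : ~~ (in_sub k \subset [pred x : L | trL k x == 0%R]).
  apply/negP => /subset_leq_card; rewrite card_in_sub => le.
  have := leq_trans le (card_trL_roots L k_gt0).
  by rewrite leq_exp2l //; lia.
exists e => //; move: etr; rewrite inE /trb.
by case: (trL01 L2 (m := k) (x := e) (eqP eK)) => ->; rewrite ?eqxx.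
Qed.

Lemma exists_trb_mul (c : L) : c \in in_sub k -> c != 0 ->
  exists2 e : L, e \in in_sub k & trb k (e * c).
Proof.
move=> cK c0; have [e eK etr] := exists_trb_in_sub.
by exists (e / c); rewrite ?in_sub_div ?mulfVK.
Qed.

Lemma trLK_surj (s : L) : s \in in_sub k -> exists x, trLK x = s.
Proof.
move=> sK; have [w wK | allK] := pickP (fun w : L => w \notin in_sub k); last first.
  have : (#|L| <= #|@in_sub L k|)%N.
    by apply: subset_leq_card; apply/subsetP => x _; have /negbFE := allK x.
  by rewrite cardL card_in_sub leq_exp2l //; lia.
have Tw0 : trLK w != 0 by rewrite trLK_eq0.
exists (s / trLK w * w).
by rewrite trLKMl ?divfK // in_sub_div // trLK_in_sub.
Qed.

Lemma sum_sign_trb_in_sub (c : L) : c \in in_sub k ->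
  \sum_(e in in_sub k) (-1) ^+ trb k (e * c) =
  (if c == 0%R then (2 ^ k)%:R else 0) :> int.
Proof.
move=> cK; have [-> | c0] := eqVneq c 0.
  by under eq_bigr do rewrite mulr0 trb0; rewrite sumr_const card_in_sub.
have [e0 e0K e0c] := exists_trb_mul cK c0.
apply: (sum_sign_shift_flip (x0 := e0)) => [e | e eK]; last first.
  by rewrite mulrDl trbkD ?in_subM // e0c addbT.
apply/idP/idP => [/in_subD/(_ e0K) | /in_subD/(_ e0K) //].
by rewrite -addrA addrr_pchar2 // addr0.
Qed.

(* Average over the translates x + e, e in K: the resulting character sum over K
   vanishes unless c x = 0. *)
Lemma sum_sign_collapse (phi : L -> bool) (c : L -> L) :
  (forall x, c x \in in_sub k) ->
  (forall x e, e \in in_sub k -> phi (x + e) = phi x (+) trb k (e * c x)) ->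
  \sum_x (-1) ^+ phi x = \sum_(x | c x == 0%R) (-1) ^+ phi x :> int.
Proof.
move=> cK phiD; have K0 : ((2 ^ k)%:R : int) != 0 by rewrite pnatr_eq0 expn_eq0.
apply: (mulfI K0); rewrite -card_in_sub mulr_natl -sumr_const.
have shift e : e \in in_sub k -> \sum_x (-1) ^+ phi x =
    \sum_x (-1) ^+ phi x * (-1) ^+ trb k (e * c x) :> int.
  move=> eK; rewrite (reindex_inj (addIr e)) /=.
  by apply: eq_bigr => x _; rewrite phiD // signr_addb.
rewrite (eq_bigr _ shift) exchange_big mulr_sumr [RHS]big_mkcond /=.
apply: eq_bigr => x _; rewrite -mulr_sumr sum_sign_trb_in_sub // card_in_sub.
by case: eqP; rewrite ?mulr0 // mulrC.
Qed.

Lemma sum_sign_trLK_fibre (phi : L -> bool) x0 :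
  (forall e, e \in in_sub k -> phi (x0 + e) = phi x0) ->
  \sum_(x | trLK x == trLK x0) (-1) ^+ phi x = (-1) ^+ phi x0 * (2 ^ k)%:R :> int.
Proof.
move=> phiK; rewrite (reindex_inj (addrI x0)) /=.
rewrite (eq_bigl (mem (in_sub k))) => [|e]; last first.
  by rewrite trLKD -{2}[trLK x0]addr0 (inj_eq (addrI _)) trLK_eq0.
rewrite (eq_bigr (fun=> (-1) ^+ phi x0)) => [|e eK]; last by rewrite phiK.
by rewrite sumr_const card_in_sub mulr_natr.
Qed.

Lemma shift_null_third_derivs (g : L -> bool) (c : L -> L) x y :
  null_third_derivs g -> (forall x, c x \in in_sub k) ->
  (forall x e, e \in in_sub k -> g (x + e) = g x (+) trb k (e * c x)) ->
  c (x + y) + c x + c y + c 0 = 0.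
Proof.
move=> g3 cK gD; apply/eqP; apply: contraT => w0.
have [e eK] := exists_trb_mul (in_subD (in_subD (in_subD (cK _) (cK _)) (cK _)) (cK _)) w0.
rewrite !mulrDr !trbkD ?in_subD ?in_subM // => tr_w.
have ge : g e = g 0 (+) trb k (e * c 0) by rewrite -{1}[e]add0r gD.
have := g3 x y e; rewrite /third_deriv !(gD _ e eK) ge.
by move: tr_w; do 4 case: (trb k (e * c _)); do 4 case: (g _).
Qed.

Lemma exp_fixed_in_sub_ge d : (1 < d)%N ->
  (forall s : L, s \in in_sub k -> s ^+ d = s) -> (2 ^ k <= d)%N.
Proof.
move=> d1 dK; pose p : {poly L} := 'X^d - 'X.
have sp : size p = d.+1.
  by rewrite /p size_polyDl ?size_polyXn // size_polyN size_polyX ltnS.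
have p0 : p != 0 by rewrite -size_poly_gt0 sp.
have roots : all (root p) (enum (in_sub k)).
  by apply/allP => s; rewrite mem_enum /root /p !hornerE => /dK ->; rewrite subrr.
by have := max_poly_roots p0 roots (enum_uniq _); rewrite -cardE card_in_sub sp.
Qed.

End RelativeTrace.

(* With q = 2^k, A = 2^(k-r) and R = 2^r: the i-th exponent of G times 2^r is
   q^2 i + q (2^r - i), and x^(q^2) = x. *)
Lemma Gfun_exponent_mul (i A R q : nat) : (A * R = q)%N -> (0 < q)%N -> (i < R)%N ->
  (((i * A + 1) * (q - 1) + 1) * R = q * q * i + q * (R - i))%N.
Proof.
case: q => // q AR _ iR; rewrite subn1 /=.
have -> : R = (i + (R - i))%N by rewrite subnKC // ltnW.
by move: AR; set j := (R - i)%N => AR; nia.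
Qed.

Section GComponents.
Variables (L : finFieldType) (k r : nat).
Hypotheses (cardL : #|L| = (2 ^ (2 * k))%N) (r_gt0 : (0 < r)%N) (r_le_k : (r <= k)%N).
Let L2 : 2%N \in [pchar L] := card_finPcharP cardL (isT : prime 2).
Local Notation G := (@Gfun L k r).
Local Notation T := (@trLK L k).
Local Notation d := (2 ^ r).-1.

Lemma Gfun_exp2r x : G x ^+ (2 ^ r) = conjK k x * T x ^+ d + conjK k x ^+ (2 ^ r).
Proof.
rewrite /Gfun (exp2n_sum L2) -sum_exp2n_shifted //; apply: eq_big_nat => i /andP[_ ir].
have AR : (2 ^ (k - r) * 2 ^ r = 2 ^ k)%N by rewrite -expnD subnK.
rewrite -exprM (Gfun_exponent_mul AR) ?expn_gt0 // exprD -expnD addnn -mul2n exprM.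
by rewrite -cardL expf_card /conjK exprM.
Qed.

Lemma Gfun_in_sub x : G x \in in_sub k.
Proof.
apply/in_subP/(exp2n_inj L2 (m := r)) => /=.
rewrite -conjKX Gfun_exp2r (conjKD cardL) conjKM (conjKX k (conjK k x)) (conjKX k (T x)).
rewrite (conjKK cardL).
have /in_subP -> := trLK_in_sub cardL x.
apply/eqP; rewrite -subr_eq0 (oppr_pchar2 L2) addrACA -mulrDl -(exp2nD L2).
by rewrite -[x + _]/(T x) -exprS prednK ?expn_gt0 // addrr_pchar2.
Qed.

Lemma Gfun_exp2r_shift x e : e \in in_sub k ->
  G (x + e) ^+ (2 ^ r) + G x ^+ (2 ^ r) = e * T x ^+ d + e ^+ (2 ^ r).
Proof.
move=> eK; have /eqP Te : T e == 0 by rewrite trLK_eq0.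
have /in_subP conj_e := eK.
rewrite !Gfun_exp2r (trLKD cardL) Te addr0 (conjKD cardL) conj_e mulrDl (exp2nD L2).
set a := conjK k x * _; set b := conjK k x ^+ _.
transitivity (e * T x ^+ d + e ^+ (2 ^ r) + (a + a) + (b + b)); first by ring.
by rewrite !addrr_pchar2 // !addr0.
Qed.

Definition Ggrad (lam x : L) := lam ^+ (2 ^ r) * T x ^+ d + lam.

Lemma Ggrad_in_sub lam x : lam \in in_sub k -> Ggrad lam x \in in_sub k.
Proof. by move=> lamK; rewrite in_subD ?in_subM ?in_subX ?trLK_in_sub. Qed.

Lemma trb_GfunD lam x e : lam \in in_sub k -> e \in in_sub k ->
  trb k (lam * G (x + e)) = trb k (lam * G x) (+) trb k (e * Ggrad lam x).
Proof.
move=> lamK eK; have GK := Gfun_in_sub.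
have -> : lam * G (x + e) = lam * G x + lam * (G (x + e) + G x).
  by rewrite mulrDr addrCA addrr_pchar2 // addr0.
rewrite trbkD ?in_subM ?in_subD //; congr (_ (+) _).
rewrite -(trb_exp2n_in_sub cardL r) ?in_subM ?in_subD // exprMn (exp2nD L2).
rewrite Gfun_exp2r_shift //.
rewrite /Ggrad !mulrDr !trbkD ?in_subM ?in_subX ?trLK_in_sub //; congr (_ (+) _).
  by rewrite mulrCA.
by rewrite -exprMn (trb_exp2n_in_sub cardL) ?in_subM // mulrC.
Qed.

Lemma Ggrad_inj lam x y : coprime r k -> lam \in in_sub k -> lam != 0 ->
  Ggrad lam x = Ggrad lam y -> T x = T y.
Proof.
move=> rk lamK lam0 /addIr/(mulfI (expf_neq0 _ lam0)).
exact: in_sub_expr_inj r_gt0 rk (trLK_in_sub cardL x) (trLK_in_sub cardL y).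
Qed.

Lemma Ggrad_third_diff lam x y :
  Ggrad lam (x + y) + Ggrad lam x + Ggrad lam y + Ggrad lam 0 =
  lam ^+ (2 ^ r) * (T (x + y) ^+ d + T x ^+ d + T y ^+ d).
Proof.
have T0 : T 0 = 0 by apply/eqP; rewrite trLK_eq0 ?in_sub0.
have d0 : (0 < d)%N by rewrite -ltnS prednK ?expn_gt0 // (ltn_exp2l 0).
rewrite /Ggrad T0 expr0n (gtn_eqF d0) mulr0 add0r.
transitivity (lam ^+ (2 ^ r) * (T (x + y) ^+ d + T x ^+ d + T y ^+ d) + 2 * (2 * lam)).
  by ring.
by rewrite mul2r_eq0 // addr0.
Qed.

Variable u : 'I_k -> L.
Hypothesis u_basis : is_F2_basis u.
Let k_gt0 : (0 < k)%N := leq_trans r_gt0 r_le_k.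

Variable g : L -> bool.
Hypothesis g_shift : forall x e, e \in in_sub k -> g (x + e) = g x.

Lemma Gcomponent_plateaued lam : coprime r k -> lam \in in_sub k -> lam != 0 ->
  plateaued (2 * k) (fun x => trb k (lam * G x) (+) g x).
Proof.
move=> rk lamK lam0; exists k; split; [lia | lia | move=> a].
pose c x := Ggrad lam x + T a.
have cK x : c x \in in_sub k by rewrite in_subD ?Ggrad_in_sub ?trLK_in_sub.
pose phi x := trb k (lam * G x) (+) g x (+) trb (2 * k) (a * x).
have phiD x e : e \in in_sub k -> phi (x + e) = phi x (+) trb k (e * c x).
  move=> eK; rewrite /phi trb_GfunD // g_shift // trb2k_shift // /c (mulrDr e (Ggrad lam x)).
  rewrite trbkD ?in_subM ?Ggrad_in_sub ?trLK_in_sub //.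
  by do 2 case: (trb k (e * _)); do 2 case: (trb _ _); case: (g x).
rewrite /walsh -/phi (sum_sign_collapse cardL u_basis k_gt0 cK phiD).
have [x0 /eqP cx0 | c_ne0] := pickP (fun x => c x == 0); last by rewrite big_pred0.
rewrite (eq_bigl (fun x => T x == T x0)) => [|x]; last first.
  rewrite -cx0 /c (inj_eq (addIr _)); apply/eqP/eqP => [|/eqP]; first exact: Ggrad_inj.
  by rewrite /Ggrad => /eqP ->.
rewrite (sum_sign_trLK_fibre cardL u_basis) => [|e eK]; last first.
  by rewrite phiD // cx0 mulr0 trb0 addbF.
by apply/orP; right; case: (phi x0); rewrite ?mulN1r ?mul1r ?abszN natz.
Qed.

Lemma Gcomponent_not_null_third_derivs lam : (1 < r)%N -> (r < k)%N ->
  lam \in in_sub k -> lam != 0 ->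
  ~ null_third_derivs (fun x => trb k (lam * G x) (+) g x).
Proof.
move=> r1 rk lamK lam0 g3.
have additive (s t : L) : s \in in_sub k -> t \in in_sub k -> (s + t) ^+ d = s ^+ d + t ^+ d.
  move=> sK tK; have [x <-] := trLK_surj cardL u_basis k_gt0 sK.
  have [y <-] := trLK_surj cardL u_basis k_gt0 tK.
  have gD z e : e \in in_sub k -> trb k (lam * G (z + e)) (+) g (z + e) =
      trb k (lam * G z) (+) g z (+) trb k (e * Ggrad lam z).
    by move=> eK; rewrite trb_GfunD // g_shift // addbAC.
  have GgK z : Ggrad lam z \in in_sub k by exact: Ggrad_in_sub.
  have := shift_null_third_derivs cardL u_basis k_gt0 x y g3 GgK gD.
  move/eqP; rewrite Ggrad_third_diff mulf_eq0 expf_eq0 (negbTE lam0) andbF /=.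
  by rewrite (trLKD cardL) => sum0; apply/eqP; rewrite -subr_eq0 (oppr_pchar2 L2) addrA.
have fixed (s : L) : s \in in_sub k -> s ^+ d = s.
  by move=> sK; apply: (exp2n1_fixed L2); rewrite additive ?in_sub1 // expr1n.
have d1 : (1 < d)%N by rewrite -ltnS prednK ?expn_gt0 // (ltn_exp2l 1).
have := exp_fixed_in_sub_ge cardL u_basis d1 fixed.
by rewrite leqNgt -ltnS prednK ?expn_gt0 // (leq_trans _ (leqnSn _)) // ltn_exp2l.
Qed.

End GComponents.

Lemma eq_plateaued (L : finFieldType) n (g1 g2 : L -> bool) :
  g1 =1 g2 -> plateaued n g1 -> plateaued n g2.
Proof.
move=> g12 [s [ns sn Ws]]; exists s; split=> // a.
by have -> : walsh n g2 a = walsh n g1 a by apply: eq_bigr => x _; rewrite g12.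
Qed.

Lemma ffun_of_shift (L : finFieldType) k (u : 'I_k -> L) (P : reduced_poly k) x e :
  #|L| = (2 ^ (2 * k))%N -> is_F2_basis u -> e \in in_sub k ->
  ffun_of (2 * k) u P (x + e) = ffun_of (2 * k) u P x.
Proof.
move=> cardL [uK _ _] eK.
have shift j : trb (2 * k) (u j * (x + e)) = trb (2 * k) (u j * x).
  have /eqP ue0 : trLK k (u j * e) == 0 by rewrite (trLK_eq0 cardL) in_subM //; apply: uK.
  by rewrite mulrDr (trb2kD cardL) (trb_trLK cardL (u j * e)) ue0 trb0 addbF.
by apply: eq_bigr => S _; under eq_forallb => j do rewrite shift.
Qed.

Theorem corollary7 (L : finFieldType) (k r t : nat)
  (u : 'I_k -> L) (F : 'I_t -> reduced_poly k) :
  #|L| = (2 ^ (2 * k))%N ->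
  (1 < r)%N -> (r < k)%N -> coprime r k ->
  is_F2_basis u ->
  (0 < t)%N ->
  let n := (2 * k)%N in
  let f := fun i => ffun_of n u (F i) in
  (H_vplateaued n k r f <-> f_vplateaued n f) /\
  ((2 < k)%N -> (forall i, deg_le n 2 (f i)) ->
     H_vplateaued n k r f /\ ~ H_quadratic n k r f).
Proof.
move=> cardL r1 rk rk_coprime u_basis _ n f.
have [r0 rk'] : (0 < r)%N /\ (r <= k)%N by split; apply: ltnW.
have L2 : 2%N \in [pchar L] := card_finPcharP cardL (isT : prime 2).
have f_shift v x e : e \in in_sub k -> fcomp f v (x + e) = fcomp f v x.
  by move=> eK; apply: eq_bigr => i _; rewrite /f ffun_of_shift.
have H0 v : fcomp f v =1 Hcomp k r f 0 v by move=> x; rewrite /Hcomp mul0r trb0.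
have f_to_H : f_vplateaued n f -> H_vplateaued n k r f.
  move=> fP lam v lamK; have [-> [/eqP // | /fP fvP] | lam0 _] := eqVneq lam 0.
    exact: eq_plateaued (H0 v) fvP.
  exact: (Gcomponent_plateaued cardL r0 rk' u_basis (f_shift v)).
split.
  split=> [HP v v_ne0 | ]; last exact: f_to_H.
  exact: eq_plateaued (fsym (H0 v)) (HP 0 v (in_sub0 _ _) (or_intror v_ne0)).
move=> _ f_quad; split.
  apply: f_to_H => v _; apply: (null_third_derivs_plateaued cardL).
  apply: (null_third_derivs_fcomp L2) => i.
  exact: (deg_le2_null_third_derivs L2 (f_quad i)).
move=> /(_ 1 (fun=> false) (in_sub1 _ _) (or_introl (oner_neq0 _))).
move=> /(deg_le2_null_third_derivs L2).
exact: (Gcomponent_not_null_third_derivs cardL r0 rk' u_basis (f_shift _) r1 rk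
  (in_sub1 _ _) (oner_neq0 _)).
Qed.
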